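(* Let $M^3$ be a real hypersurface in $\mathbb{C}P^2$ or $\mathbb{C}H^2$ and $p\in M$. If $AW\ne\alpha W$ at $p$, write $AW=\alpha W+\beta X$ with $\beta>0$ and $X\in W^\perp$ a unit vector; if $AW=\alpha W$ at $p$, let $X$ be any unit principal vector in $W^\perp$ and set $\beta=0$. Let $Y=\varphi X$, $\lambda=\langle AX,X\rangle$, $\mu=\langle AX,Y\rangle$, $\nu=\langle AY,Y\rangle$ (so $\mu=0$ in the second case). Then $(R(X,Y)\cdot S)X$ and $(R(X,Y)\cdot S)Y$ are multiples of $W$ at $p$ if and only if $\mu=0$ and $$\beta^2\nu^2=-(4c+\lambda\nu)\big(\alpha(\lambda-\nu)-\beta^2\big).$$
   Context: $\mathbb{C}P^2$, $\mathbb{C}H^2$ carry Kähler metrics of constant holomorphic sectional curvature $4c\ne0$, complex structure $J$, connection $\widetilde\nabla$. For a real hypersurface $M$ with unit normal $\xi$: $W$ with $JW=\xi$; $W^\perp$ the holomorphic distribution; $\varphi X=JX-\langle X,W\rangle\xi$; $AX=-\widetilde\nabla_X\xi$; $\alpha=\langle AW,W\rangle$; $R$ the curvature tensor of $M$; $S$ the Ricci tensor, $\langle SX,Y\rangle=\operatorname{trace}\{Z\mapsto R(Z,X)Y\}$; $R(X,Y)\cdot S=R(X,Y)\circ S-S\circ R(X,Y)$. *)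

(* Pointwise (tangent-space) model of a real hypersurface
   M^3 in CP^2 / CH^2: T_pM is identified, via an orthonormal frame, with
   'rV[R]_3 carrying the standard inner product; linear maps act on the right. *)
From HB Require Import structures.
From mathcomp Require Import all_boot all_order all_algebra.
Set Implicit Arguments. Unset Strict Implicit. Unset Printing Implicit Defensive.
Import Order.TTheory GRing.Theory Num.Theory.
Local Open Scope ring_scope.

Section Hyp.
Variable R : realFieldType.

Definition dotv (u v : 'rV[R]_3) : R := (u *m v^T) 0 0.

Definition ebase (i : 'I_3) : 'rV[R]_3 := delta_mx 0 i.

(* Curvature tensor of M given by the Gauss equation of a real hypersurface in
   a complex space form of constant holomorphic sectional curvature 4c:
   R(X,Y)Z = c(<Y,Z>X - <X,Z>Y + <phiY,Z>phiX - <phiX,Z>phiY - 2<phiX,Y>phiZ)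
             + <AY,Z>AX - <AX,Z>AY. *)
Definition curvR (c : R) (A P : 'M[R]_3) (X Y Z : 'rV[R]_3) : 'rV[R]_3 :=
  c *: (dotv Y Z *: X - dotv X Z *: Y + dotv (Y *m P) Z *: (X *m P)
        - dotv (X *m P) Z *: (Y *m P) - (2 * dotv (X *m P) Y) *: (Z *m P))
  + dotv (Y *m A) Z *: (X *m A) - dotv (X *m A) Z *: (Y *m A).

Definition ricciB (c : R) (A P : 'M[R]_3) (X Y : 'rV[R]_3) : R :=
  \sum_(i < 3) dotv (curvR c A P (ebase i) X Y) (ebase i).

Definition ricciS (c : R) (A P : 'M[R]_3) (X : 'rV[R]_3) : 'rV[R]_3 :=
  \sum_(j < 3) ricciB c A P X (ebase j) *: ebase j.

Definition RdotS (c : R) (A P : 'M[R]_3) (X Y Z : 'rV[R]_3) : 'rV[R]_3 :=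
  curvR c A P X Y (ricciS c A P Z) - ricciS c A P (curvR c A P X Y Z).

End Hyp.

(* At p the tangent space has the orthonormal frame (X, Y = phi X, W), in which
   A has the matrix [[lambda, mu, beta], [mu, nu, 0], [beta, 0, alpha]] and phi
   rotates X to Y.  The Gauss equation gives S = c(5 - 3 W (x) W) + (tr A) A - A^2,
   so every component of (R(X,Y).S)X and (R(X,Y).S)Y is a polynomial in
   c, alpha, beta, lambda, mu, nu.  The X- and Y-components turn out to be
   +-2 mu F and 4 c beta^2 + (nu - lambda) F with
   F = alpha (lambda nu - mu^2 + 4c) - nu beta^2; when mu = 0 the latter is
   minus the difference of the two sides of the stated equation, and if F = 0
   then beta = 0 (as c <> 0), which forces mu = 0 by the choice of X. *)
From HB Require Import structures.
From mathcomp Require Import all_boot all_order all_algebra.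
From mathcomp Require Import ring lra.
Set Implicit Arguments. Unset Strict Implicit. Unset Printing Implicit Defensive.
Import Order.TTheory GRing.Theory Num.Theory.
Local Open Scope ring_scope.

Section InnerProduct.
Variable R : realFieldType.
Implicit Types (u v w : 'rV[R]_3) (M : 'M[R]_3).

Lemma dotvE u v : dotv u v = \sum_k u 0 k * v 0 k.
Proof. by rewrite /dotv !mxE; apply: eq_bigr => k _; rewrite mxE. Qed.

Lemma dotvC u v : dotv u v = dotv v u.
Proof. by rewrite !dotvE; apply: eq_bigr => k _; rewrite mulrC. Qed.

Lemma dotvDl u v w : dotv (u + v) w = dotv u w + dotv v w.
Proof. by rewrite !dotvE -big_split; apply: eq_bigr => k _; rewrite mxE mulrDl. Qed.

Lemma dotvZl a u w : dotv (a *: u) w = a * dotv u w.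
Proof. by rewrite !dotvE mulr_sumr; apply: eq_bigr => k _; rewrite mxE mulrA. Qed.

Lemma dotvNl u w : dotv (- u) w = - dotv u w.
Proof. by rewrite -scaleN1r dotvZl mulN1r. Qed.

Lemma dotvDr u v w : dotv w (u + v) = dotv w u + dotv w v.
Proof. by rewrite dotvC dotvDl !(dotvC w). Qed.

Lemma dotvZr a u w : dotv w (a *: u) = a * dotv w u.
Proof. by rewrite dotvC dotvZl dotvC. Qed.

Lemma dotvNr u w : dotv w (- u) = - dotv w u.
Proof. by rewrite dotvC dotvNl dotvC. Qed.

Lemma dotv0r u : dotv u 0 = 0.
Proof. by rewrite -(scale0r 0) dotvZr mul0r. Qed.

Lemma dotv_mulmxl u v M : dotv (u *m M) v = dotv u (v *m M^T).
Proof. by rewrite /dotv trmx_mul trmxK mulmxA. Qed.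

Lemma dotv_ebase u i : dotv u (ebase R i) = u 0 i.
Proof.
rewrite dotvE (bigD1 i) //= big1 => [|k ki]; rewrite /ebase !mxE ?eqxx /=.
  by rewrite mulr1 addr0.
by rewrite (negbTE ki) mulr0.
Qed.

Lemma dotv_ebasel u i : dotv (ebase R i) u = u 0 i.
Proof. by rewrite dotvC dotv_ebase. Qed.

Lemma mulmx_trmx_scale u v w : u *m v^T *m w = dotv u v *: w.
Proof. by rewrite [u *m v^T]mx11_scalar mul_scalar_mx. Qed.

Lemma mulmx_trmx_entry m n (B : 'M[R]_(m, 3)) (C : 'M[R]_(n, 3)) i j :
  (B *m C^T) i j = dotv (row i B) (row j C).
Proof. by rewrite dotvE mxE; apply: eq_bigr => k _; rewrite !mxE. Qed.

End InnerProduct.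

Section RicciOperator.
Variables (R : realFieldType) (c : R) (A P : 'M[R]_3).
Implicit Types (U V W : 'rV[R]_3).

Lemma mxtrace_skew : P^T = - P -> \tr P = 0.
Proof. by move=> Pt; have := mxtrace_tr P; rewrite Pt raddfN => ?; lra. Qed.

Lemma curvR_ebase_dotv V U i :
  dotv (curvR c A P (ebase R i) V U) (ebase R i) =
  c * (dotv V U - U 0 i * V 0 i + dotv (V *m P) U * P i i
       - (U *m P^T) 0 i * (V *m P) 0 i - 2 * ((V *m P^T) 0 i * (U *m P) 0 i))
  + dotv (V *m A) U * A i i - (U *m A^T) 0 i * (V *m A) 0 i.
Proof.
rewrite dotv_ebase /curvR !dotv_mulmxl !dotv_ebasel.
rewrite /ebase -!rowE !mxE !eqxx /=; ring.
Qed.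

Lemma ricciBE V U :
  ricciB c A P V U =
  c * (3 * dotv V U - dotv U V + dotv (V *m P) U * \tr P
       - dotv (U *m P^T) (V *m P) - 2 * dotv (V *m P^T) (U *m P))
  + dotv (V *m A) U * \tr A - dotv (U *m A^T) (V *m A).
Proof.
rewrite /ricciB; under eq_bigr => i _ do rewrite curvR_ebase_dotv.
rewrite [dotv U V]dotvE [dotv (U *m P^T) _]dotvE [dotv (V *m P^T) _]dotvE.
by rewrite [dotv (U *m A^T) _]dotvE /mxtrace !big_ord_recl !big_ord0; ring.
Qed.

Variable W : 'rV[R]_3.
Hypotheses (PP : P *m P = W^T *m W - 1%:M) (Pt : P^T = - P).

Lemma ricciB_dotv V U :
  ricciB c A P V U =
  dotv (c *: (5%:R *: V - (3 * dotv V W) *: W) + \tr A *: (V *m A) - V *m A *m A) U.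
Proof.
rewrite ricciBE mxtrace_skew // !dotv_mulmxl !trmxK -!mulmxA PP.
rewrite !mulmxBr !mulmx1 !mulmxA !mulmx_trmx_scale.
rewrite !(dotvDl, dotvDr, dotvNl, dotvNr, dotvZl, dotvZr).
by rewrite -[dotv V (U *m A^T)]dotv_mulmxl (dotvC U (V *m A *m A)) (dotvC U V)
  (dotvC W U); ring.
Qed.

Lemma ricciSE V :
  ricciS c A P V =
  c *: (5%:R *: V - (3 * dotv V W) *: W) + \tr A *: (V *m A) - V *m A *m A.
Proof.
rewrite /ricciS; under eq_bigr => j _ do rewrite ricciB_dotv dotv_ebase.
by rewrite -row_sum_delta.
Qed.

End RicciOperator.

Section OrthonormalFrame.
Variables (R : realFieldType) (X Y W : 'rV[R]_3).
Hypotheses (XX : dotv X X = 1) (YY : dotv Y Y = 1) (WW : dotv W W = 1)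
  (XY : dotv X Y = 0) (XW : dotv X W = 0) (YW : dotv Y W = 0).

Definition frame_mx : 'M[R]_3 := \matrix_(i < 3, j < 3) (nth 0 [:: X; Y; W] i) 0 j.

Lemma row_frame_mx i : row i frame_mx = nth 0 [:: X; Y; W] i.
Proof. by apply/rowP => k; rewrite !mxE. Qed.

Lemma frame_mx_orthogonal : frame_mx^T *m frame_mx = 1%:M.
Proof.
apply: mulmx1C; apply/matrixP => i j.
rewrite mulmx_trmx_entry !row_frame_mx !mxE.
have YX : dotv Y X = 0 by rewrite dotvC.
have WX : dotv W X = 0 by rewrite dotvC.
have WY : dotv W Y = 0 by rewrite dotvC.
by case: i => [[|[|[|?]]] ?]; case: j => [[|[|[|?]]] ?].
Qed.

Lemma row_frame_decomp V : V = dotv V X *: X + dotv V Y *: Y + dotv V W *: W.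
Proof.
rewrite -{1}[V]mulmx1 -frame_mx_orthogonal mulmxA mulmx_sum_row.
rewrite !big_ord_recl big_ord0 !mulmx_trmx_entry !row_frame_mx /=.
have row0_id (u : 'rV[R]_3) : row 0 u = u by apply/rowP => k; rewrite mxE.
by rewrite row0_id addr0 addrA.
Qed.

Lemma mxtrace_frame (A : 'M[R]_3) :
  \tr A = dotv (X *m A) X + dotv (Y *m A) Y + dotv (W *m A) W.
Proof.
rewrite -[in LHS](mul1mx A) -frame_mx_orthogonal -mulmxA mxtrace_mulC /mxtrace.
rewrite !big_ord_recl big_ord0 !mulmx_trmx_entry !row_mul !row_frame_mx /=.
by rewrite addr0 addrA.
Qed.

Lemma scale_frameP V : (exists t, V = t *: W) <-> dotv V X = 0 /\ dotv V Y = 0.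
Proof.
split=> [[t ->]|[VX VY]].
  by rewrite !dotvZl ![dotv W _]dotvC XW YW mulr0.
by exists (dotv V W); rewrite {1}(row_frame_decomp V) VX VY !scale0r !add0r.
Qed.

End OrthonormalFrame.

Section Hypersurface.
Variables (R : realFieldType) (c : R) (A P : 'M[R]_3) (W X : 'rV[R]_3) (beta : R).
Hypotheses (WW : dotv W W = 1) (WP : W *m P = 0) (PP : P *m P = W^T *m W - 1%:M)
  (Pt : P^T = - P) (At : A^T = A) (XX : dotv X X = 1) (XW : dotv X W = 0).

Let Y := X *m P.
Let alpha := dotv (W *m A) W.
Let lambda := dotv (X *m A) X.
Let mu := dotv (X *m A) Y.
Let nu := dotv (Y *m A) Y.
Let F := alpha * (lambda * nu - mu ^+ 2 + 4 * c) - nu * beta ^+ 2.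

Hypothesis WA : W *m A = alpha *: W + beta *: X.

Lemma dotv_mulmx_skew u v : dotv (u *m P) v = - dotv u (v *m P).
Proof. by rewrite dotv_mulmxl Pt mulmxN dotvNr. Qed.

Lemma dotv_mulmx_sym u v : dotv (u *m A) v = dotv u (v *m A).
Proof. by rewrite dotv_mulmxl At. Qed.

Lemma mulmx_Y_P : Y *m P = - X.
Proof.
by rewrite -mulmxA PP mulmxBr mulmx1 mulmxA mulmx_trmx_scale XW scale0r add0r.
Qed.

Lemma dotv_YY : dotv Y Y = 1.
Proof. by rewrite dotv_mulmx_skew mulmx_Y_P dotvNr opprK. Qed.

Lemma dotv_XY : dotv X Y = 0.
Proof. by have := dotv_mulmx_skew X X; rewrite dotvC => ?; lra. Qed.

Lemma dotv_YW : dotv Y W = 0.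
Proof. by rewrite dotv_mulmx_skew WP dotv0r oppr0. Qed.

Let row_decomp := row_frame_decomp XX dotv_YY WW dotv_XY XW dotv_YW.

Lemma mulmx_X_A : X *m A = lambda *: X + mu *: Y + beta *: W.
Proof.
rewrite {1}(row_decomp (X *m A)) [dotv (X *m A) W]dotv_mulmx_sym WA.
by rewrite dotvDr !dotvZr XX XW mulr0 mulr1 add0r.
Qed.

Lemma mulmx_Y_A : Y *m A = mu *: X + nu *: Y.
Proof.
rewrite {1}(row_decomp (Y *m A)) [dotv (Y *m A) W]dotv_mulmx_sym WA.
rewrite dotvDr !dotvZr [dotv Y X]dotvC dotv_XY dotv_YW !mulr0 addr0 scale0r addr0.
by rewrite [dotv (Y *m A) X]dotv_mulmx_sym dotvC.
Qed.

Lemma mxtrace_A : \tr A = lambda + nu + alpha.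
Proof. exact: mxtrace_frame XX dotv_YY WW dotv_XY XW dotv_YW A. Qed.

(* Locked so that the failing rewrite attempts in [compute_in_frame] do not
   unfold it; the computation is then carried out on coordinate triples. *)
Fact frame_comb_key : unit. Proof. by []. Qed.
Definition frame_comb (a b d : R) : 'rV[R]_3 :=
  locked_with frame_comb_key (a *: X + b *: Y + d *: W).

Lemma frame_combE a b d : frame_comb a b d = a *: X + b *: Y + d *: W.
Proof. by rewrite /frame_comb locked_withE. Qed.

Lemma frame_combD a b d a' b' d' :
  frame_comb a b d + frame_comb a' b' d' = frame_comb (a + a') (b + b') (d + d').
Proof. by apply/rowP => i; rewrite !frame_combE !mxE; ring. Qed.

Lemma frame_combN a b d : - frame_comb a b d = frame_comb (- a) (- b) (- d).
Proof. by apply/rowP => i; rewrite !frame_combE !mxE; ring. Qed.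

Lemma frame_combZ k a b d : k *: frame_comb a b d = frame_comb (k * a) (k * b) (k * d).
Proof. by apply/rowP => i; rewrite !frame_combE !mxE; ring. Qed.

Lemma frame_comb_A a b d :
  frame_comb a b d *m A = frame_comb (a * lambda + b * mu + d * beta)
                                     (a * mu + b * nu) (a * beta + d * alpha).
Proof.
rewrite !frame_combE !mulmxDl -!scalemxAl mulmx_X_A mulmx_Y_A WA.
by apply/rowP => i; rewrite !mxE; ring.
Qed.

Lemma frame_comb_P a b d : frame_comb a b d *m P = frame_comb (- b) a 0.
Proof.
rewrite !frame_combE !mulmxDl -!scalemxAl mulmx_Y_P WP.
by apply/rowP => i; rewrite !mxE; ring.
Qed.

Lemma dotv_frame_comb a b d a' b' d' :
  dotv (frame_comb a b d) (frame_comb a' b' d') = a * a' + b * b' + d * d'.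
Proof.
rewrite !frame_combE !(dotvDl, dotvDr, dotvZl, dotvZr) ![dotv Y X]dotvC.
by rewrite ![dotv W _]dotvC XX dotv_YY WW dotv_XY XW dotv_YW; ring.
Qed.

Lemma frame_comb_X : X = frame_comb 1 0 0.
Proof. by apply/rowP => i; rewrite !frame_combE !mxE; ring. Qed.

Lemma frame_comb_Y : Y = frame_comb 0 1 0.
Proof. by apply/rowP => i; rewrite !frame_combE !mxE; ring. Qed.

Lemma frame_comb_W : W = frame_comb 0 0 1.
Proof. by apply/rowP => i; rewrite !frame_combE !mxE; ring. Qed.

(* The section abbreviations are generalized so that [ring] treats them as
   atoms rather than unfolding them into sums of matrix entries. *)
Local Ltac compute_in_frame :=
  rewrite /RdotS !(ricciSE c A PP Pt) mxtrace_A /curvR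
    frame_comb_X frame_comb_Y frame_comb_W;
  do 12 rewrite ?frame_comb_A ?frame_comb_P ?dotv_frame_comb
                ?frame_combZ ?frame_combN ?frame_combD;
  rewrite /F; generalize alpha beta lambda mu nu; intros; ring.

Lemma RdotS_X_dotv_X : dotv (RdotS c A P X Y X) X = 2 * mu * F.
Proof. compute_in_frame. Qed.

Lemma RdotS_X_dotv_Y :
  dotv (RdotS c A P X Y X) Y = 4 * c * beta ^+ 2 + (nu - lambda) * F.
Proof. compute_in_frame. Qed.

Lemma RdotS_Y_dotv_X :
  dotv (RdotS c A P X Y Y) X = 4 * c * beta ^+ 2 + (nu - lambda) * F.
Proof. compute_in_frame. Qed.

Lemma RdotS_Y_dotv_Y : dotv (RdotS c A P X Y Y) Y = - (2 * mu * F).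
Proof. compute_in_frame. Qed.

Lemma RdotS_scaleWP :
  ((exists t, RdotS c A P X Y X = t *: W) /\ (exists t, RdotS c A P X Y Y = t *: W))
  <-> (2 * mu * F = 0 /\ 4 * c * beta ^+ 2 + (nu - lambda) * F = 0).
Proof.
have frameP := scale_frameP XX dotv_YY WW dotv_XY XW dotv_YW.
split=> [[/frameP[] + + /frameP[_ _]] | [muF G]].
  by rewrite RdotS_X_dotv_X RdotS_X_dotv_Y => -> ->.
split; apply/frameP.
  by rewrite RdotS_X_dotv_X RdotS_X_dotv_Y.
by rewrite RdotS_Y_dotv_X RdotS_Y_dotv_Y muF oppr0.
Qed.

End Hypersurface.

Lemma semisymmetry_equation (R : realFieldType) (c alpha beta lambda mu nu : R) :
  c != 0 -> (beta = 0 -> mu = 0) ->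
  let F := alpha * (lambda * nu - mu ^+ 2 + 4 * c) - nu * beta ^+ 2 in
  (2 * mu * F = 0 /\ 4 * c * beta ^+ 2 + (nu - lambda) * F = 0) <->
  (mu = 0 /\
   beta ^+ 2 * nu ^+ 2 = - (4 * c + lambda * nu) * (alpha * (lambda - nu) - beta ^+ 2)).
Proof.
move=> c0 beta0_mu0 F.
have G_mu0 : mu = 0 -> 4 * c * beta ^+ 2 + (nu - lambda) * F =
  - (beta ^+ 2 * nu ^+ 2 + (4 * c + lambda * nu) * (alpha * (lambda - nu) - beta ^+ 2)).
  by rewrite /F => ->; ring.
split=> [[muF G0] | [mu0 eq]]; last first.
  by split; [rewrite mu0 mulr0 mul0r | rewrite G_mu0 // eq; ring].
have mu0 : mu = 0.
  apply/eqP; apply: contraT => mu_neq0.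
  have F0 : F = 0.
    by move/eqP: muF; rewrite !mulf_eq0 pnatr_eq0 (negbTE mu_neq0) => /eqP.
  have beta0 : beta = 0.
    move/eqP: G0; rewrite F0 mulr0 addr0 mulf_eq0 sqrf_eq0 mulf_eq0 pnatr_eq0.
    by rewrite (negbTE c0) => /eqP.
  by move: mu_neq0; rewrite beta0_mu0 ?eqxx.
by split=> //; move: (G_mu0 mu0); rewrite G0 => ?; lra.
Qed.

Theorem proposition9 (R : realFieldType) (c : R) (A P : 'M[R]_3)
    (W X : 'rV[R]_3) (beta : R) :
  let alpha := dotv (W *m A) W in
  let Y := X *m P in
  let lambda := dotv (X *m A) X in
  let mu := dotv (X *m A) Y in
  let nu := dotv (Y *m A) Y in
  c != 0 ->
  dotv W W = 1 -> W *m P = 0 -> P *m P = W^T *m W - 1%:M -> P^T = - P ->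
  A^T = A ->
  dotv X X = 1 -> dotv X W = 0 -> 0 <= beta ->
  W *m A = alpha *: W + beta *: X ->
  (beta = 0 -> exists k : R, X *m A = k *: X) ->
  ((exists t : R, RdotS c A P X Y X = t *: W) /\
   (exists t : R, RdotS c A P X Y Y = t *: W))
  <->
  (mu = 0 /\
   beta ^+ 2 * nu ^+ 2 = - (4 * c + lambda * nu) * (alpha * (lambda - nu) - beta ^+ 2)).
Proof.
move=> alpha Y lambda mu nu c0 WW WP PP Pt At XX XW _ WA X_principal.
have beta0_mu0 : beta = 0 -> mu = 0.
  move=> /X_principal [k Xk].
  by rewrite /mu Xk dotvZl (dotv_XY X Pt) mulr0.
rewrite (RdotS_scaleWP c WW WP PP Pt At XX XW WA).
exact: semisymmetry_equation.
Qed.
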